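(* Let $(u_j)_{j\ge0}$ be the sequence defined by $u_j=k$ if $j=2^k$ for some $k\in\mathbb{N}$, and $u_j=0$ otherwise. Then $(u_j)_{j\ge0}\notin\ell^\infty(\mathbb{N})$ and \[\sup_{\varepsilon>0}\,\varepsilon\sum_{j\ge0}2^{-j\varepsilon}u_j\le\frac{2}{e\ln 2}.\] *)

From Stdlib Require Export Reals.
From Coquelicot Require Export Coquelicot.
Open Scope R_scope.

Definition is_u (u : nat -> R) : Prop :=
  (forall k : nat, u (2 ^ k)%nat = INR k) /\
  (forall j : nat, (forall k : nat, j <> (2 ^ k)%nat) -> u j = 0).

(** Only the indices [j = 2^k] contribute, so the series is [sum_k k 2^(-2^k eps)].
    Writing [y = 2^k eps ln 2], the inequality [y e^(-y) <= 1/e] bounds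
    [eps k 2^(-2^k eps)] by [k / (2^k e ln 2)], and [sum_k k / 2^k = 2]. *)

From Stdlib Require Import Reals Lra Lia Classical.
From Coquelicot Require Import Coquelicot.
Open Scope R_scope.

Lemma mul_exp_neg_le (y : R) : y * exp (- y) <= exp (-1).
Proof.
  assert (Hsplit : exp (-1) = exp (y - 1) * exp (- y)).
  { rewrite <- exp_plus. f_equal. ring. }
  rewrite Hsplit. apply Rmult_le_compat_r.
  - left. apply exp_pos.
  - pose proof (exp_ineq1_le (y - 1)). lra.
Qed.

Lemma ln_pos (b : R) : 1 < b -> 0 < ln b.
Proof. intros Hb. rewrite <- ln_1. apply ln_increasing; lra. Qed.

Lemma Rpower_neg_mul_le (b x eps : R) : 1 < b -> 0 < x -> 0 < eps ->
  eps * Rpower b (- (x * eps)) <= / (exp 1 * ln b * x).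
Proof.
  intros Hb Hx Heps.
  pose proof (ln_pos b Hb) as Hlnb.
  pose proof (exp_pos 1) as He.
  set (y := x * eps * ln b).
  assert (Hlhs : eps * Rpower b (- (x * eps)) = y * exp (- y) / (ln b * x)).
  { unfold Rpower, y. replace (- (x * eps) * ln b) with (- (x * eps * ln b)) by ring.
    field. lra. }
  assert (Hrhs : / (exp 1 * ln b * x) = exp (-1) / (ln b * x)).
  { replace (-1) with (- (1)) by ring. rewrite exp_Ropp. field. lra. }
  rewrite Hlhs, Hrhs. unfold Rdiv. apply Rmult_le_compat_r.
  - left. apply Rinv_0_lt_compat, Rmult_lt_0_compat; lra.
  - apply mul_exp_neg_le.
Qed.

Lemma sum_INR_div_pow2 (n : nat) :
  sum_f_R0 (fun k => INR k / 2 ^ k) n = 2 - (INR n + 2) / 2 ^ n.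
Proof.
  induction n as [|n IH].
  - simpl. field.
  - rewrite tech5, IH, S_INR. assert (0 < 2 ^ n) by (apply pow_lt; lra).
    simpl. field. lra.
Qed.

Lemma sum_f_R0_zero_tail (a : nat -> R) (m d : nat) :
  (forall j, (m < j <= m + d)%nat -> a j = 0) ->
  sum_f_R0 a (m + d) = sum_f_R0 a m.
Proof.
  induction d as [|d IH]; intros Hzero.
  - now rewrite Nat.add_0_r.
  - rewrite Nat.add_succ_r, tech5, (Hzero (S (m + d))), IH; [ring | |lia].
    intros j Hj. apply Hzero. lia.
Qed.

Lemma sum_f_R0_pow2_support (a : nat -> R) :
  (forall j, (forall k, j <> (2 ^ k)%nat) -> a j = 0) ->
  forall n, sum_f_R0 a (2 ^ n) = sum_f_R0 (fun k => a (2 ^ k)%nat) n.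
Proof.
  intros Hsupp n. induction n as [|n IH].
  - assert (Ha0 : a 0%nat = 0).
    { apply Hsupp. intros k Hk. exact (Nat.pow_nonzero 2 k ltac:(lia) (eq_sym Hk)). }
    simpl. rewrite Ha0. ring.
  - pose proof (Nat.pow_nonzero 2 n ltac:(lia)).
    assert (Hpow : (2 ^ S n = S (2 ^ n + (2 ^ n - 1)))%nat).
    { rewrite Nat.pow_succ_r'. lia. }
    rewrite Hpow, tech5, sum_f_R0_zero_tail, <- Hpow, IH, tech5; [reflexivity|].
    intros j Hj. apply Hsupp. intros k ->.
    assert (n < k)%nat by (apply (Nat.pow_lt_mono_r_iff 2); lia).
    assert (k < S n)%nat by (apply (Nat.pow_lt_mono_r_iff 2); rewrite ?Nat.pow_succ_r'; lia).
    lia.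
Qed.

Lemma is_series_nonneg_bounded (a : nat -> R) (B : R) :
  (forall n, 0 <= a n) -> (forall n, sum_f_R0 a n <= B) ->
  exists S, is_series a S /\ S <= B.
Proof.
  intros Hpos Hbound.
  assert (Hgrow : Un_growing (sum_f_R0 a)).
  { intros n. rewrite tech5. pose proof (Hpos (S n)). lra. }
  assert (Hub : has_ub (sum_f_R0 a)) by (exists B; intros x [n ->]; apply Hbound).
  destruct (growing_cv _ Hgrow Hub) as [S HS].
  exists S. split.
  - apply is_series_Reals. exact HS.
  - apply is_lim_seq_Reals in HS.
    exact (is_lim_seq_le _ _ _ _ Hbound HS (is_lim_seq_const B)).
Qed.

Section WeightedSeries.

Variable u : nat -> R.
Hypothesis hu : is_u u.
Variable eps : R.
Hypothesis eps_pos : 0 < eps.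

Let weighted (j : nat) : R := Rpower 2 (- (INR j * eps)) * u j.

Lemma is_u_nonneg (j : nat) : 0 <= u j.
Proof.
  destruct hu as [Hpow Hzero].
  destruct (classic (exists k, j = (2 ^ k)%nat)) as [[k ->]|Hnot].
  - rewrite Hpow. apply pos_INR.
  - rewrite Hzero; [lra|]. intros k Hk. apply Hnot. now exists k.
Qed.

Lemma weighted_nonneg (j : nat) : 0 <= weighted j.
Proof.
  apply Rmult_le_pos; [left; apply exp_pos | apply is_u_nonneg].
Qed.

Lemma weighted_pow2_le (k : nat) :
  weighted (2 ^ k) * eps <= INR k / 2 ^ k * / (exp 1 * ln 2).
Proof.
  unfold weighted. destruct hu as [Hpow _]. rewrite Hpow.
  assert (H2k : 0 < 2 ^ k) by (apply pow_lt; lra).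
  pose proof (ln_pos 2 ltac:(lra)).
  pose proof (exp_pos 1).
  pose proof (Rpower_neg_mul_le 2 (INR (2 ^ k)) eps ltac:(lra)) as Hdecay.
  rewrite pow_INR in Hdecay |- *. replace (INR 2) with 2 in * by (simpl; ring).
  specialize (Hdecay H2k eps_pos).
  replace (INR k / 2 ^ k * / (exp 1 * ln 2)) with (INR k * / (exp 1 * ln 2 * 2 ^ k))
    by (field; lra).
  replace (Rpower 2 (- (2 ^ k * eps)) * INR k * eps)
    with (INR k * (eps * Rpower 2 (- (2 ^ k * eps)))) by ring.
  apply Rmult_le_compat_l; [apply pos_INR | exact Hdecay].
Qed.

Lemma weighted_partial_sum_le (n : nat) :
  sum_f_R0 weighted n <= 2 / (exp 1 * ln 2) / eps.
Proof.
  pose proof (ln_pos 2 ltac:(lra)).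
  pose proof (exp_pos 1).
  assert (Hmono : sum_f_R0 weighted n <= sum_f_R0 weighted (2 ^ n)).
  { apply Rge_le, growing_prop.
    - intros m. rewrite tech5. pose proof (weighted_nonneg (S m)). lra.
    - pose proof (Nat.pow_gt_lin_r 2 n). lia. }
  assert (Hsparse : sum_f_R0 weighted (2 ^ n) = sum_f_R0 (fun k => weighted (2 ^ k)) n).
  { apply sum_f_R0_pow2_support. intros j Hj. unfold weighted.
    destruct hu as [_ Hzero]. rewrite Hzero by exact Hj. ring. }
  assert (Hscaled : eps * sum_f_R0 (fun k => weighted (2 ^ k)) n <= 2 / (exp 1 * ln 2)).
  { rewrite scal_sum.
    eapply Rle_trans; [apply sum_Rle; intros k _; apply weighted_pow2_le|].
    rewrite <- scal_sum, sum_INR_div_pow2.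
    assert (0 < 2 ^ n) by (apply pow_lt; lra).
    assert (0 <= (INR n + 2) / 2 ^ n)
      by (apply Rdiv_le_0_compat; [pose proof (pos_INR n)|]; lra).
    assert (0 < / (exp 1 * ln 2)) by (apply Rinv_0_lt_compat, Rmult_lt_0_compat; lra).
    unfold Rdiv at 2. rewrite (Rmult_comm 2). apply Rmult_le_compat_l; lra. }
  apply (Rmult_le_reg_l eps); [exact eps_pos|].
  replace (eps * (2 / (exp 1 * ln 2) / eps)) with (2 / (exp 1 * ln 2)) by (field; lra).
  rewrite Hsparse in Hmono.
  apply Rmult_le_compat_l with (r := eps) in Hmono; lra.
Qed.

End WeightedSeries.

Theorem lemma8p1 (u : nat -> R) (hu : is_u u) :
  (~ exists M : R, forall j : nat, Rabs (u j) <= M) /\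
  (forall eps : R, 0 < eps ->
     exists S : R,
       is_series (fun j : nat => Rpower 2 (- (INR j * eps)) * u j) S /\
       eps * S <= 2 / (exp 1 * ln 2)).
Proof.
  split.
  - intros [M HM]. destruct (INR_unbounded M) as [k Hk].
    specialize (HM (2 ^ k)%nat). destruct hu as [Hpow _].
    rewrite Hpow, Rabs_pos_eq in HM by apply pos_INR. lra.
  - intros eps Heps.
    destruct (is_series_nonneg_bounded _ _ (weighted_nonneg u hu eps)
                (weighted_partial_sum_le u hu eps Heps)) as [S [HS HSle]].
    exists S. split; [exact HS|].
    pose proof (exp_pos 1). pose proof (ln_pos 2 ltac:(lra)).
    replace (2 / (exp 1 * ln 2)) with (eps * (2 / (exp 1 * ln 2) / eps)) by (field; lra).
    apply Rmult_le_compat_l; lra.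
Qed.
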